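(* Let $n\ge 2$, $\kappa\ge1$, and let $G\in\mathcal G_{[n;\kappa]}$ be a skew-symmetric game with payoff structure vectors $V_1^c,\dots,V_n^c\in\mathbb R^{\kappa^n}$. Then $$V_i^c=-V_1^c\ltimes W_{[\kappa^{i-2},\kappa]}\ltimes W_{[\kappa,\kappa^{i-1}]},\qquad i=2,\dots,n.$$
   Context: Semi-tensor product: for $A\in\mathbb R^{m\times n}$, $B\in\mathbb R^{p\times q}$ and $t=\mathrm{lcm}(n,p)$, $A\ltimes B=(A\otimes I_{t/n})(B\otimes I_{t/p})$; it is associative and coincides with the Kronecker product on column vectors. Swap matrix: $W_{[m,n]}\in\mathbb R^{mn\times mn}$ is the permutation matrix with $W_{[m,n]}(X\otimes Y)=Y\otimes X$ for all $X\in\mathbb R^m$, $Y\in\mathbb R^n$ (so $W_{[1,n]}=W_{[n,1]}=I_n$). A finite game $G\in\mathcal G_{[n;\kappa]}$ has players $\{1,\dots,n\}$, each with strategy set $\{1,\dots,\kappa\}$, strategy $j$ identified with $\delta_\kappa^j$ (the $j$-th column of $I_\kappa$), and payoffs $c_i$; $V_i^c\in\mathbb R^{\kappa^n}$ is the unique row vector with $c_i(x_1,\dots,x_n)=V_i^c\ltimes x_1\ltimes\cdots\ltimes x_n$ for all $x_j\in\{\delta_\kappa^1,\dots,\delta_\kappa^\kappa\}$. $G$ is skew-symmetric if for every permutation $\sigma\in\mathbf S_n$, every $i$ and every profile, $c_i(x_1,\dots,x_n)=\mathrm{sgn}(\sigma)\,c_{\sigma(i)}(x_{\sigma^{-1}(1)},\dots,x_{\sigma^{-1}(n)})$.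 *)

From mathcomp Require Import all_boot all_order all_algebra all_fingroup.
From mathcomp Require Import mxtens.
Set Implicit Arguments. Unset Strict Implicit. Unset Printing Implicit Defensive.
Import GRing.Theory Num.Theory.
Local Open Scope ring_scope.

(* Kronecker product: mxtens.tensmx (A *t B), with the standard row-major
   convention (A *t B)(i*p+k, j*q+l) = A i j * B k l. *)

Lemma stp_dim_proof (n p : nat) :
  (p * (lcmn n p %/ p) = n * (lcmn n p %/ n))%N.
Proof.
by rewrite mulnC divnK ?dvdn_lcmr // mulnC divnK ?dvdn_lcml.
Qed.

Definition stp {R : pzRingType} {m n p q : nat} (A : 'M[R]_(m, n))
  (B : 'M[R]_(p, q)) : 'M[R]_(m * (lcmn n p %/ n), q * (lcmn n p %/ p)) :=
  (A *t (1%:M : 'M[R]_(lcmn n p %/ n)))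
    *m castmx (stp_dim_proof n p, erefl)
         (B *t (1%:M : 'M[R]_(lcmn n p %/ p))).

Definition mx_heq {R : Type} {m n m' n' : nat}
  (A : 'M[R]_(m, n)) (B : 'M[R]_(m', n')) : Prop :=
  exists e : (m = m') * (n = n'), castmx e A = B.

(* W_[m,n] : the mn x mn permutation matrix with W (X ⊗ Y) = Y ⊗ X:
   the basis vector of index a*n+b (a<m, b<n) is sent to index b*m+a. *)
Definition swapmx {R : pzRingType} (m n : nat) : 'M[R]_(m * n) :=
  \matrix_(k, j) ((k : nat) == ((j %% n) * m + j %/ n)%N)%:R.

(* A game in G_[n;kappa]: players 'I_n (player j+1 of the paper is j),
   strategies 'I_kappa (strategy s+1 of the paper is s, identified with
   delta_kappa^{s+1} = delta_mx s 0), payoffs c i x for a profile x. *)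
Definition game (R : Type) (n kappa : nat) := 'I_n -> ('I_n -> 'I_kappa) -> R.

Definition sgn {R : pzRingType} {n : nat} (s : 'S_n) : R := (-1) ^+ odd_perm s.

Definition skew_symmetric {R : pzRingType} {n kappa : nat} (c : game R n kappa) :=
  forall (s : 'S_n) (i : 'I_n) (x : 'I_n -> 'I_kappa),
    c i x = sgn s * c (s i) (fun j => x ((s^-1)%g j)).

(* strategy vector delta_kappa^{x j + 1} for player j (0 for out-of-range j) *)
Definition strat_vec {R : pzRingType} {n kappa : nat} (x : 'I_n -> 'I_kappa)
  (j : nat) : 'cV[R]_kappa :=
  match insub j with Some j' => delta_mx (x j') 0 | None => 0 end.

(* x_1 ⋉ x_2 ⋉ ... ⋉ x_l  (on column vectors ⋉ is the Kronecker product) *)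
Fixpoint kron_prefix {R : pzRingType} {kappa : nat} (v : nat -> 'cV[R]_kappa)
  (l : nat) : 'cV[R]_(kappa ^ l) :=
  match l with
  | 0 => castmx (esym (expn0 kappa), erefl) (1%:M : 'M[R]_1)
  | l'.+1 => castmx (esym (expnSr kappa l'), muln1 1)
               (kron_prefix v l' *t v l')
  end.

Definition profile_vec {R : pzRingType} {n kappa : nat} (x : 'I_n -> 'I_kappa)
  : 'cV[R]_(kappa ^ n) := kron_prefix (strat_vec x) n.

(* V is the payoff structure vector of c_i:
   c_i(x_1,...,x_n) = V ⋉ x_1 ⋉ ... ⋉ x_n for all profiles
   (dimensions match, so this semi-tensor product is the ordinary product). *)
Definition is_structure_vector {R : pzRingType} {n kappa : nat}
  (c : game R n kappa) (i : 'I_n) (V : 'rV[R]_(kappa ^ n)) : Prop :=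
  forall x : 'I_n -> 'I_kappa, c i x = (V *m profile_vec x) 0 0.

From mathcomp Require Import all_boot all_order all_algebra all_fingroup.
From mathcomp Require Import mxtens.
From mathcomp Require Import zify ring.
Import GRing.Theory Num.Theory.
Set Implicit Arguments. Unset Strict Implicit. Unset Printing Implicit Defensive.

(* Read a profile x as the base-kappa numeral x_1 x_2 ... x_n: this is the index
   of the basis vector x_1 ⋉ ... ⋉ x_n, so c_i(x) is the entry of V_i^c at that
   index.  Skew-symmetry for the transposition (1 i) gives
   c_i(x) = - c_1(x ∘ (1 i)), i.e. V_i^c is -V_1^c read at indices whose first
   and i-th digits are exchanged.  On the other side, when pq divides the length
   of the row vector A, the entry of A ⋉ W_[p,q] at an index whose two leading
   digit blocks are (u, v), with u < p and v < q, is the entry of A at (v, u).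
   Writing an index as (a, B, b, C) with a, b the first and i-th digits, the two
   swap matrices of the statement send it to (B, b, a, C) and then to
   (b, B, a, C): exactly the exchange of the first and i-th digits. *)

Definition swap_index m n k := k %% n * m + k %/ n.

Definition tens_index (g : nat -> nat) d k := g (k %/ d) * d + k %% d.

Lemma swap_indexE m n u v : v < n -> swap_index m n (u * n + v) = v * m + u.
Proof.
move=> lt_vn; rewrite /swap_index modnMDl modn_small //.
by rewrite divnMDl ?divn_small ?addn0 //; lia.
Qed.

Lemma tens_indexE g d u v : v < d -> tens_index g d (u * d + v) = g u * d + v.
Proof.
move=> lt_vd; rewrite /tens_index modnMDl modn_small //.
by rewrite divnMDl ?divn_small ?addn0 //; lia.
Qed.

Lemma swap_index_lt m n k : k < m * n -> swap_index m n k < m * n.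
Proof.
move=> lt_k; have n_gt0 : 0 < n by case: n lt_k; rewrite ?muln0.
have : k %/ n < m by rewrite ltn_divLR.
have : k %% n < n by rewrite ltn_mod.
rewrite /swap_index; nia.
Qed.

Lemma tens_swap_digits K j D a b B C :
  a < K -> b < K -> B < K ^ j -> C < D ->
  tens_index (swap_index (K ^ j) K) (K * D)
    (tens_index (swap_index K (K ^ j.+1)) D (((a * K ^ j + B) * K + b) * D + C))
  = ((b * K ^ j + B) * K + a) * D + C.
Proof.
move=> lt_aK lt_bK lt_BK lt_CD.
have lt_BbK : B * K + b < K ^ j.+1 by rewrite expnSr; nia.
have -> : (a * K ^ j + B) * K + b = a * K ^ j.+1 + (B * K + b) by rewrite expnSr; ring.
rewrite tens_indexE // swap_indexE //.
have -> : ((B * K + b) * K + a) * D + C = (B * K + b) * (K * D) + (a * D + C) by ring.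
by rewrite tens_indexE ?swap_indexE //; [ring | nia].
Qed.

Fixpoint radix_val (K : nat) (f : nat -> nat) (s l : nat) : nat :=
  if l is l'.+1 then radix_val K f s l' * K + f (s + l') else 0.

Lemma radix_valD K f s l1 l2 :
  radix_val K f s (l1 + l2) = radix_val K f s l1 * K ^ l2 + radix_val K f (s + l1) l2.
Proof.
elim: l2 => [|l2 IH]; first by rewrite !addn0 expn0 muln1.
by rewrite addnS /= IH expnSr addnA; ring.
Qed.

Lemma radix_val1 K f s : radix_val K f s 1 = f s.
Proof. by rewrite /= mul0n add0n addn0. Qed.

Lemma radix_val_lt K f s l :
  (forall j, s <= j < s + l -> f j < K) -> radix_val K f s l < K ^ l.
Proof.
elim: l => [|l IH] f_lt //=; rewrite expnSr.
have lt_val : radix_val K f s l < K ^ l by apply: IH => j hj; apply: f_lt; lia.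
have lt_last : f (s + l) < K by apply: f_lt; lia.
nia.
Qed.

Lemma eq_radix_val K f g s l :
  (forall j, s <= j < s + l -> f j = g j) -> radix_val K f s l = radix_val K g s l.
Proof.
elim: l => [|l IH] eq_fg //=.
by rewrite eq_fg ?IH // => [j hj|]; [apply: eq_fg | ]; lia.
Qed.

Lemma radix_val_split K f n j : j.+2 <= n ->
  radix_val K f 0 n =
  ((f 0 * K ^ j + radix_val K f 1 j) * K + f j.+1) * K ^ (n - j.+2)
  + radix_val K f j.+2 (n - j.+2).
Proof.
move=> le_jn; rewrite -{1}(subnKC le_jn) radix_valD.
rewrite [in radix_val K f 0 j.+2](_ : j.+2 = 1 + j + 1); last by lia.
by rewrite !radix_valD !radix_val1 expn1 !add0n add1n.
Qed.

Lemma radix_val_surj K s l k : 0 < K -> k < K ^ l ->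
  exists2 f, (forall j, f j < K) & radix_val K f s l = k.
Proof.
move=> K_gt0; elim: l k => [|l IH] k lt_k.
  by exists (fun=> 0) => //; move: lt_k; rewrite expn0; case: k.
have lt_kK : k %/ K < K ^ l by rewrite ltn_divLR // -expnSr.
have [f f_lt val_f] := IH _ lt_kK.
exists (fun j => if j == s + l then k %% K else f j).
  by move=> j; case: eqP; rewrite ?ltn_mod.
rewrite /= eqxx (@eq_radix_val _ _ f) ?val_f -?divn_eq // => j /andP[_ lt_j].
by rewrite ltn_eqF.
Qed.

Section Profiles.
Variables n K : nat.
Implicit Types x : 'I_n -> 'I_K.

Definition digit x (j : nat) : nat :=
  if (insub j : option 'I_n) is Some j' then x j' else 0.

Lemma digit_ord x (o : 'I_n) : digit x o = x o.
Proof. by rewrite /digit valK. Qed.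

Lemma digit_lt x j : j < n -> digit x j < K.
Proof. by move=> lt_jn; rewrite /digit insubT. Qed.

Lemma radix_val_digit_lt x s l : s + l <= n -> radix_val K (digit x) s l < K ^ l.
Proof. by move=> le_sln; apply: radix_val_lt => j /andP[_ lt_j]; apply: digit_lt; lia. Qed.

Lemma profile_index_lt x : radix_val K (digit x) 0 n < K ^ n.
Proof. exact: radix_val_digit_lt. Qed.

Definition profile_ord x : 'I_(K ^ n) := Ordinal (profile_index_lt x).

Lemma profile_ord_surj (k : 'I_(K ^ n)) : 0 < K -> exists x, profile_ord x = k.
Proof.
move=> K_gt0; have [f f_lt val_f] := radix_val_surj 0 K_gt0 (ltn_ord k).
exists (fun j => Ordinal (f_lt j)); apply: val_inj; rewrite /= -val_f.
by apply: eq_radix_val => j /andP[_ lt_jn]; rewrite /digit insubT.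
Qed.

Lemma profile_ord_tperm x (i0 i : 'I_n) j :
  val i0 = 0 -> val i = j.+1 ->
  val (profile_ord (x \o tperm i0 i)) =
  tens_index (swap_index (K ^ j) K) (K * K ^ (n - j.+2))
    (tens_index (swap_index K (K ^ j.+1)) (K ^ (n - j.+2)) (profile_ord x)).
Proof.
move=> i0_0 i_j; have le_jn : j.+2 <= n by rewrite -i_j ltn_ord.
have digit0 : digit (x \o tperm i0 i) 0 = digit x j.+1.
  by rewrite -i0_0 -i_j !digit_ord /= tpermL.
have digitj : digit (x \o tperm i0 i) j.+1 = digit x 0.
  by rewrite -i0_0 -i_j !digit_ord /= tpermR.
have digitD m : m != 0 -> m != j.+1 -> digit (x \o tperm i0 i) m = digit x m.
  rewrite /digit; case: insubP => // o _ <-; rewrite -i0_0 -i_j !val_eqE => ne_o0 ne_oi.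
  by rewrite /= tpermD // eq_sym.
rewrite /= !(radix_val_split _ _ le_jn) digit0 digitj.
rewrite (@eq_radix_val _ _ (digit x) 1) => [|m /andP[m_gt0 lt_m]]; last first.
  by apply: digitD; lia.
rewrite (@eq_radix_val _ _ (digit x) j.+2) => [|m /andP[le_m _]]; last first.
  by apply: digitD; lia.
by rewrite tens_swap_digits ?digit_lt ?radix_val_digit_lt //; lia.
Qed.

End Profiles.

Definition swap_ord m n (k : 'I_(m * n)) : 'I_(m * n) :=
  Ordinal (swap_index_lt (ltn_ord k)).
Arguments swap_ord : clear implicits.

Definition tens_ord p q d (f : 'I_q -> 'I_p) (k : 'I_(q * d)) : 'I_(p * d) :=
  mxtens_index (f (mxtens_unindex k).1, (mxtens_unindex k).2).
Arguments tens_ord {p q} d f k.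

Local Open Scope ring_scope.

Section MxHeq.
Variable R : pzRingType.

Lemma mx_heq_refl m n (A : 'M[R]_(m, n)) : mx_heq A A.
Proof. by exists (erefl, erefl); rewrite castmx_id. Qed.

Lemma mx_heq_castmx m n m' n' (e : (m = m') * (n = n')) (A : 'M[R]_(m, n)) :
  mx_heq (castmx e A) A.
Proof. by case: e => em en; exists (esym em, esym en); rewrite castmxK. Qed.

Lemma mx_heq_sym m n m' n' (A : 'M[R]_(m, n)) (B : 'M[R]_(m', n')) :
  mx_heq A B -> mx_heq B A.
Proof. by case=> e <-; exact: mx_heq_castmx. Qed.

Lemma mx_heq_trans m n m' n' m'' n'' (A : 'M[R]_(m, n)) (B : 'M[R]_(m', n'))
    (C : 'M[R]_(m'', n'')) :
  mx_heq A B -> mx_heq B C -> mx_heq A C.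
Proof.
case=> [[e1 f1] <-] [[e2 f2] <-].
by exists (etrans e1 e2, etrans f1 f2); rewrite castmx_comp.
Qed.

Lemma mx_heq_opp m n m' n' (A : 'M[R]_(m, n)) (B : 'M[R]_(m', n')) :
  mx_heq A B -> mx_heq (- A) (- B).
Proof.
by case=> [[em en] eB]; subst B; case: m' / em; case: n' / en; exists (erefl, erefl).
Qed.

Lemma mx_heq_mulmx m n p m' n' p' (A : 'M[R]_(m, n)) (B : 'M[R]_(n, p))
    (A' : 'M[R]_(m', n')) (B' : 'M[R]_(n', p')) :
  mx_heq A A' -> mx_heq B B' -> mx_heq (A *m B) (A' *m B').
Proof.
case=> [[em en] eA] [[en' ep] eB]; subst A' B'.
case: m' / em; case: n' / en en'; case: p' / ep => en.
by rewrite (eq_irrelevance en erefl) !castmx_id; exists (erefl, erefl).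
Qed.

Lemma mx_heq_tensmx m n p q m' n' p' q' (A : 'M[R]_(m, n)) (B : 'M[R]_(p, q))
    (A' : 'M[R]_(m', n')) (B' : 'M[R]_(p', q')) :
  mx_heq A A' -> mx_heq B B' -> mx_heq (A *t B) (A' *t B').
Proof.
case=> [[em en] eA] [[ep eq] eB]; subst A' B'.
by case: m' / em; case: n' / en; case: p' / ep; case: q' / eq; exists (erefl, erefl).
Qed.

Lemma mx_heq_scalar n n' (a : R) : n = n' -> mx_heq (a%:M : 'M_n) (a%:M : 'M_n').
Proof. by move=> <-; exists (erefl, erefl). Qed.

Lemma mx_heq_tensmx1 m n (A : 'M[R]_(m, n)) : mx_heq (A *t (1%:M : 'M_1)) A.
Proof.
exists (muln1 m, muln1 n); apply/matrixP => i j; rewrite castmxE !mxE.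
by rewrite !ord1 eqxx mulr1; congr (A _ _); apply: val_inj; rewrite /= divn1.
Qed.

Lemma mx_heq_stp m n p q m' n' (A : 'M[R]_(m, n)) (A' : 'M[R]_(m', n'))
    (B : 'M[R]_(p, q)) :
  mx_heq A A' -> mx_heq (stp A B) (stp A' B).
Proof.
by case=> [[em en] eA]; subst A'; case: m' / em; case: n' / en; exists (erefl, erefl).
Qed.

End MxHeq.

Section StpSelection.
Variable R : pzRingType.

Lemma stp_mulmx_tensmx m p d (A : 'M[R]_(m, p * d)) (B : 'M[R]_p) :
  (0 < p * d)%N -> mx_heq (stp A B) (A *m (B *t (1%:M : 'M_d))).
Proof.
move=> pd_gt0; have p_gt0 : (0 < p)%N by move: pd_gt0; rewrite muln_gt0 => /andP[].
have lcm_pd : lcmn (p * d) p = (p * d)%N.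
  by apply/eqP; rewrite eqn_dvd dvdn_lcml dvdn_lcm dvdnn dvdn_mulr.
apply: mx_heq_mulmx.
  apply: mx_heq_trans (mx_heq_tensmx1 A).
  apply: mx_heq_tensmx (mx_heq_refl A) _.
  by apply: mx_heq_scalar; rewrite lcm_pd divnn pd_gt0.
apply: mx_heq_trans (mx_heq_castmx _ _) _.
by apply: mx_heq_tensmx (mx_heq_refl B) _; apply: mx_heq_scalar; rewrite lcm_pd mulKn.
Qed.

Lemma tensmx_colsub1 p q d (f : 'I_q -> 'I_p) :
  colsub f (1%:M : 'M[R]_p) *t (1%:M : 'M_d) = colsub (tens_ord d f) 1%:M.
Proof.
apply/matrixP => i j.
case: i / (mxtens_indexP i) => a r; case: j / (mxtens_indexP j) => b s.
rewrite tensmxE !mxE -natrM mulnb /tens_ord mxtens_indexK.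
by rewrite (can_eq (@mxtens_indexK _ _)) xpair_eqE.
Qed.

Lemma swapmxE m n : swapmx m n = colsub (swap_ord m n) (1%:M : 'M[R]_(m * n)).
Proof. by apply/matrixP => i j; rewrite !mxE. Qed.

Lemma stp_colsub1 m N p d (e : (p * d)%N = N) (A : 'M[R]_(m, N))
    (f : 'I_p -> 'I_p) : (0 < N)%N ->
  mx_heq (stp A (colsub f 1%:M))
         (colsub (cast_ord e \o tens_ord d f \o cast_ord (esym e)) A).
Proof.
subst N => pd_gt0; apply: mx_heq_trans (stp_mulmx_tensmx _ _ pd_gt0) _.
rewrite tensmx_colsub1 mulmx_colsub mulmx1; exists (erefl, erefl); rewrite castmx_id.
by apply: eq_colsub => k /=; rewrite !cast_ord_id.
Qed.

End StpSelection.

Section StructureVectors.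
Variables (R : pzRingType) (n K : nat).
Implicit Types x : 'I_n -> 'I_K.

Lemma kron_prefix_strat_vec x l : (l <= n)%N -> forall r c,
  @kron_prefix R K (strat_vec x) l r c = ((r : nat) == radix_val K (digit x) 0 l)%:R.
Proof.
elim: l => [|l IH] le_ln r c.
  by rewrite /= castmxE !mxE -!val_eqE /= !ord1.
rewrite /= castmxE !mxE /= IH ?(ltnW le_ln) //.
rewrite /strat_vec /digit insubT /= !mxE -!val_eqE /= modn1 eqxx andbT -natrM mulnb.
have K_gt0 : (0 < K)%N := leq_ltn_trans (leq0n _) (ltn_ord (x (Ordinal le_ln))).
by rewrite [in RHS](divn_eq r K) eq_addl_mul ?ltn_mod.
Qed.

Lemma profile_vecE x : profile_vec x = delta_mx (profile_ord x) 0 :> 'cV[R]_(K ^ n).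
Proof.
apply/matrixP => r c; rewrite /profile_vec kron_prefix_strat_vec // !mxE.
by rewrite ord1 eqxx andbT.
Qed.

Lemma structure_vectorE (c : game R n K) i V x :
  is_structure_vector c i V -> c i x = V 0 (profile_ord x).
Proof. by move=> hV; rewrite hV profile_vecE -colE mxE. Qed.

Lemma skew_symmetric_tperm (c : game R n K) (u v : 'I_n) x :
  skew_symmetric c -> u != v -> c v x = - c u (x \o tperm u v).
Proof.
move=> skew_c ne_uv; rewrite (skew_c (tperm u v)) tpermR tpermV /sgn odd_tperm ne_uv.
by rewrite expr1 mulN1r.
Qed.

End StructureVectors.

Theorem proposition3p8 (R : realFieldType) (n kappa : nat)
  (hn : (2 <= n)%N) (hk : (1 <= kappa)%N)
  (c : game R n kappa) (V : 'I_n -> 'rV[R]_(kappa ^ n))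
  (hskew : skew_symmetric c)
  (hV : forall i : 'I_n, is_structure_vector c i (V i))
  (i1 : 'I_n) (hi1 : (i1 : nat) = 0%N) :
  forall i : 'I_n, (0 < i)%N ->
    mx_heq (V i)
      (- stp (stp (V i1) (swapmx (kappa ^ i.-1) kappa))
             (swapmx kappa (kappa ^ i))).
Proof.
case=> [[|j] lt_jn] // _; set i := Ordinal lt_jn; rewrite /= !swapmxE.
have N_gt0 : (0 < kappa ^ n)%N by rewrite expn_gt0 hk.
(* block size kappa ^ (n - j.+1), written as in [tens_swap_digits] *)
have e1 : ((kappa ^ j * kappa) * (kappa * kappa ^ (n - j.+2)) = kappa ^ n)%N.
  by rewrite -expnSr -expnS -expnD; congr expn; lia.
have e2 : ((kappa * kappa ^ j.+1) * kappa ^ (n - j.+2) = kappa ^ n)%N.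
  by rewrite -expnS -expnD; congr expn; lia.
have stp1 := stp_colsub1 e1 (V i1) (swap_ord (kappa ^ j) kappa) N_gt0.
set P1 := colsub _ (V i1) in stp1.
have stp2 := stp_colsub1 e2 P1 (swap_ord kappa (kappa ^ j.+1)) N_gt0.
apply: mx_heq_trans (mx_heq_sym (mx_heq_opp (mx_heq_trans (mx_heq_stp _ stp1) stp2))).
rewrite /P1 -colsub_comp; exists (erefl, erefl); rewrite castmx_id.
apply/matrixP => r k; rewrite ord1 !mxE.
have [x <-] := profile_ord_surj k hk.
have ne_i1i : i1 != i by rewrite -val_eqE /= hi1.
rewrite -(structure_vectorE x (hV i)) (skew_symmetric_tperm x hskew ne_i1i).
rewrite (structure_vectorE _ (hV i1)); congr (- V i1 0 _); apply: val_inj.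
exact: (profile_ord_tperm x hi1 (erefl : val i = j.+1)).
Qed.
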